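(* Let $\mathcal{V}$ be a finite set of nodes, $\mathcal{P}$ a finite set of labels with $|\mathcal{P}|\ge 2$, and $\mathcal{E}$ a set of unordered pairs $\{i,j\}\subseteq\mathcal{V}$. Let $\theta_{ip}\in\mathbb{R}$ for $i\in\mathcal{V},p\in\mathcal{P}$, and let the pairwise potentials be associative: $\theta_{ij}(p,q)=-C_{ij,p}[p=q]$ with $C_{ij,p}\ge 0$. For $\vec{y}\in\{0,1\}^{\mathcal{V}\times\mathcal{P}}$ and $\vec{\lambda}\in\mathbb{R}^{\mathcal{V}}$ define $$L(\vec{y},\vec{\lambda})=\sum_{i\in\mathcal{V}}\sum_{p\in\mathcal{P}}\theta_{ip}y_{ip}-\sum_{\{i,j\}\in\mathcal{E}}\sum_{p\in\mathcal{P}}C_{ij,p}\,y_{ip}y_{jp}+\sum_{i\in\mathcal{V}}\lambda_i\Big(\sum_{p\in\mathcal{P}}y_{ip}-1\Big),$$ and $D(\vec{\lambda})=\min_{\vec{y}\in\{0,1\}^{\mathcal{V}\times\mathcal{P}}}L(\vec{y},\vec{\lambda})$. Fix $\vec{\lambda}^{old}\in\mathbb{R}^{\mathcal{V}}$ and a node $j\in\mathcal{V}$. For $p\in\mathcal{P}$ and $k\in\{0,1\}$ let $MM_{jp,k}=\min\{L(\vec{y},\vec{\lambda}^{old}):\vec{y}\in\{0,1\}^{\mathcal{V}\times\mathcal{P}},\ y_{jp}=k\}$ and $\delta^j_p=MM_{jp,0}-MM_{jp,1}$. Let $p^{(1)}_j\in\arg\max_{p\in\mathcal{P}}\delta^j_p$,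 $\delta^j_{(1)}=\delta^j_{p^{(1)}_j}$, and $\delta^j_{(2)}=\max_{p\in\mathcal{P}\setminus\{p^{(1)}_j\}}\delta^j_p$. Let $\Delta_j$ be any number in $[\delta^j_{(2)},\delta^j_{(1)}]$ and define $\vec{\lambda}^{new}$ by $\lambda^{new}_j=\lambda^{old}_j+\Delta_j$ and $\lambda^{new}_i=\lambda^{old}_i$ for $i\ne j$. Then $\vec{\lambda}^{new}$ maximizes $D$ with respect to the coordinate $\lambda_j$: $D(\vec{\lambda}^{new})\ge D(\vec{\lambda})$ for every $\vec{\lambda}\in\mathbb{R}^{\mathcal{V}}$ with $\lambda_i=\lambda^{old}_i$ for all $i\ne j$.
   Context: This is the setting of minimizing a pairwise energy $E(\vec x)=\sum_i\theta_i(x_i)+\sum_{\{i,j\}\in\mathcal{E}}\theta_{ij}(x_i,x_j)$ over labelings $\vec x\in\mathcal{P}^{\mathcal{V}}$, rewritten with indicator variables $y_{ip}=[x_i=p]$; $L$ is the Lagrangian obtained by relaxing the consistency constraints $\sum_p y_{ip}=1$ with multipliers $\lambda_i$, and $D$ is the corresponding Lagrangian dual function. *)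

From mathcomp Require Import all_boot all_order all_algebra.
Set Implicit Arguments. Unset Strict Implicit. Unset Printing Implicit Defensive.
Import Order.TTheory GRing.Theory Num.Theory.
Local Open Scope ring_scope.

Definition labeling (V P : finType) := {ffun V * P -> bool}.

(* Lagrangian L(y, lambda) with associative pairwise potentials
   theta_ij(p,q) = - C_{ij,p} [p = q]; edges are unordered pairs e = {i,j}
   (sets of cardinality 2), and the edge sum counts each unordered pair once:
   for e = {i,j}, y_ip y_jp = \prod_(v in e) y_vp. *)
Definition lagr (R : realFieldType) (V P : finType) (E : {set {set V}})
  (theta : V -> P -> R) (C : {set V} -> P -> R)
  (y : labeling V P) (lam : V -> R) : R :=
  \sum_(i : V) \sum_(p : P) theta i p * (y (i, p))%:R
  - \sum_(e in E) \sum_(p : P) C e p * \prod_(v in e) (y (v, p))%:R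
  + \sum_(i : V) lam i * (\sum_(p : P) (y (i, p))%:R - 1).

Definition minL (R : realFieldType) (V P : finType) (f : labeling V P -> R)
  (Q : pred (labeling V P)) (y0 : labeling V P) : R :=
  \big[Num.min/f y0]_(y | Q y) f y.

Definition y_zero (V P : finType) : labeling V P := [ffun _ => false].
Definition y_unit (V P : finType) (j : V) (p : P) : labeling V P :=
  [ffun x => x == (j, p)].

Definition dualD (R : realFieldType) (V P : finType) (E : {set {set V}})
  (theta : V -> P -> R) (C : {set V} -> P -> R) (lam : V -> R) : R :=
  minL (fun y => lagr E theta C y lam) predT (y_zero V P).

Definition minmarg (R : realFieldType) (V P : finType) (E : {set {set V}})
  (theta : V -> P -> R) (C : {set V} -> P -> R) (lam : V -> R)
  (j : V) (p : P) (k : bool) : R :=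
  minL (fun y => lagr E theta C y lam) (fun y => y (j, p) == k)
       (if k then y_unit j p else y_zero V P).

Definition delta (R : realFieldType) (V P : finType) (E : {set {set V}})
  (theta : V -> P -> R) (C : {set V} -> P -> R) (lam : V -> R)
  (j : V) (p : P) : R :=
  minmarg E theta C lam j p false - minmarg E theta C lam j p true.

From mathcomp Require Import all_boot all_order all_algebra ring lra.
Set Implicit Arguments. Unset Strict Implicit. Unset Printing Implicit Defensive.
Import Order.TTheory GRing.Theory Num.Theory.
Local Open Scope ring_scope.

(* The Lagrangian splits into independent per-label energies of the columns
   [y_{.p}], and moving [lambda_j] by [t] adds [t (s_j(y) - 1)], where [s_j(y)]
   counts the labels switched on at [j].  Since [delta_p] is exactly the gap
   between the best column with [y_jp = 0] and the best with [y_jp = 1], a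
   minimizer [y] at [lambda_new] can be repaired column by column into a
   labeling that is at least as good at any [lambda] on the line: for
   [t <= Delta] switch [p1] on at [j] (its gain [delta_p1 >= Delta] pays for
   the extra label), for [t >= Delta] switch every other label off at [j]
   (each costs [delta_q <= Delta]).  Only the bounds on [Delta] are used: the
   splitting over labels needs no sign condition on [C], no size condition on
   edges or labels, and not the maximality of [p1]. *)

Section Lagrangian.
Variables (R : realFieldType) (V P : finType) (E : {set {set V}})
  (theta : V -> P -> R) (C : {set V} -> P -> R).

Definition label_energy (lam : V -> R) (p : P) (y : labeling V P) : R :=
  \sum_(i : V) theta i p * (y (i, p))%:R
  - \sum_(e in E) C e p * \prod_(v in e) (y (v, p))%:R
  + \sum_(i : V) lam i * (y (i, p))%:R.

Definition label_count (j : V) (y : labeling V P) : R := \sum_(p : P) (y (j, p))%:R.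

Lemma label_count_ge0 j y : 0 <= label_count j y.
Proof. by apply: sumr_ge0 => p _; apply: ler0n. Qed.

Lemma eq_label_energy lam p (y z : labeling V P) :
  (forall i, y (i, p) = z (i, p)) -> label_energy lam p y = label_energy lam p z.
Proof.
move=> eq_yz; rewrite /label_energy; congr (_ - _ + _).
- by apply: eq_bigr => i _; rewrite eq_yz.
- by apply: eq_bigr => e _; congr (_ * _); apply: eq_bigr => v _; rewrite eq_yz.
- by apply: eq_bigr => i _; rewrite eq_yz.
Qed.

Lemma lagr_label_energy (y : labeling V P) lam :
  lagr E theta C y lam = \sum_p label_energy lam p y - \sum_i lam i.
Proof.
rewrite /lagr /label_energy [in RHS]big_split /= sumrB.
rewrite [\sum_p \sum_i theta i p * _]exchange_big.
rewrite [\sum_p \sum_(e in E) _]exchange_big /=.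
have -> : \sum_p \sum_i lam i * (y (i, p))%:R
          = \sum_i lam i * (\sum_p (y (i, p))%:R - 1) + \sum_i lam i.
  rewrite exchange_big /=.
  under [X in _ = X + _]eq_bigr => i _ do rewrite mulrBr mulr1 mulr_sumr.
  by rewrite sumrB subrK.
ring.
Qed.

Lemma lagr_shift (y : labeling V P) (lam lam' : V -> R) j :
  (forall i, i != j -> lam i = lam' i) ->
  lagr E theta C y lam
  = lagr E theta C y lam' + (lam j - lam' j) * (label_count j y - 1).
Proof.
move=> eq_lam; rewrite /lagr /label_count.
pose X i : R := \sum_p (y (i, p))%:R - 1.
have -> : \sum_i lam i * X i = \sum_i lam' i * X i + (lam j - lam' j) * X j.
  rewrite (bigD1 j) //= [in RHS](bigD1 j) //=.
  rewrite (eq_bigr (fun i => lam' i * X i)); last by move=> i /eq_lam ->.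
  ring.
rewrite /X; ring.
Qed.

Definition relabel (y : labeling V P) (A : pred P) (w : P -> labeling V P) :
  labeling V P := [ffun x => if A x.2 then w x.2 x else y x].

Lemma lagr_relabel (y : labeling V P) A w lam :
  lagr E theta C (relabel y A w) lam
  = lagr E theta C y lam
    + \sum_(q | A q) (label_energy lam q (w q) - label_energy lam q y).
Proof.
rewrite !lagr_label_energy [\sum_(q | A q) _]big_mkcond /=.
rewrite (eq_bigr (fun p => label_energy lam p y
   + (if A p then label_energy lam p (w p) - label_energy lam p y else 0))).
  by rewrite big_split /=; ring.
move=> p _; case: ifP => Ap.
  by rewrite addrC subrK; apply: eq_label_energy => i; rewrite ffunE /= Ap.
by rewrite addr0; apply: eq_label_energy => i; rewrite ffunE /= Ap.
Qed.

Lemma label_count_relabel1 (y : labeling V P) j p (w : labeling V P) :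
  label_count j (relabel y (pred1 p) (fun=> w))
  = label_count j y - (y (j, p))%:R + (w (j, p))%:R.
Proof.
rewrite /label_count (bigD1 p) //= [in RHS](bigD1 p) //= ffunE /= eqxx.
rewrite (eq_bigr (fun q => (y (j, q))%:R)); first by ring.
by move=> q nq; rewrite ffunE /= (negbTE nq).
Qed.

End Lagrangian.

Arguments label_count {R V P} j y.

Lemma minL_arg_min (R : realFieldType) (V P : finType) (f : labeling V P -> R)
    (Q : pred (labeling V P)) y0 :
  Q y0 -> let z := [arg min_(y < y0 | Q y) f y]%O in
  [/\ Q z, minL f Q y0 = f z & forall y, Q y -> f z <= f y].
Proof.
move=> Qy0 /=; case: arg_minP => // z Qz z_min; split => //.
apply: le_anti; rewrite /minL bigmin_le_cond //=.
by apply/bigmin_geP; split; [apply: z_min|].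
Qed.

Lemma minL_le (R : realFieldType) (V P : finType) (f : labeling V P -> R)
    (Q : pred (labeling V P)) y0 y :
  Q y -> minL f Q y0 <= f y.
Proof. exact: bigmin_le_cond. Qed.

Section MinMarginals.
Variables (R : realFieldType) (V P : finType) (E : {set {set V}})
  (theta : V -> P -> R) (C : {set V} -> P -> R) (lam : V -> R) (j : V).

Local Notation L y := (lagr E theta C y lam).
Local Notation energy := (label_energy E theta C lam).

Definition mm_arg (p : P) (k : bool) : labeling V P :=
  [arg min_(y < if k then y_unit j p else y_zero V P | y (j, p) == k) L y]%O.

Lemma mm_arg_spec p k :
  [/\ mm_arg p k (j, p) = k, minmarg E theta C lam j p k = L (mm_arg p k)
    & forall y : labeling V P, y (j, p) = k -> L (mm_arg p k) <= L y].
Proof.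
have init : (if k then y_unit j p else y_zero V P) (j, p) == k.
  by case: k; rewrite ffunE ?eqxx.
have [/eqP at_jp min_eq is_min] := @minL_arg_min _ _ _ (fun y => L y)
  (fun y : labeling V P => y (j, p) == k) _ init.
by split=> // y /eqP; apply: is_min.
Qed.

Lemma mm_arg_at p k : mm_arg p k (j, p) = k.
Proof. by case: (mm_arg_spec p k). Qed.

(* Swapping a single column in or out of [mm_arg p k] shows it is also a
   minimizer of the per-label energy among columns with [y_jp = k]. *)
Lemma energy_mm_arg_min p k (w : labeling V P) :
  w (j, p) = k -> energy p (mm_arg p k) <= energy p w.
Proof.
move=> w_jp; have [_ _ is_min] := mm_arg_spec p k.
have := is_min (relabel (mm_arg p k) (pred1 p) (fun=> w)).
rewrite lagr_relabel big_pred1_eq ffunE /= eqxx => /(_ w_jp).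
by rewrite lerDl subr_ge0.
Qed.

Lemma L_mm_arg_le p k (w : labeling V P) :
  L (mm_arg p k) <= L w + (energy p (mm_arg p k) - energy p w).
Proof.
have [at_jp _ is_min] := mm_arg_spec p k.
have := is_min (relabel w (pred1 p) (fun=> mm_arg p k)).
by rewrite lagr_relabel big_pred1_eq ffunE /= eqxx => /(_ at_jp).
Qed.

Lemma delta_energy_gap p :
  delta E theta C lam j p = energy p (mm_arg p false) - energy p (mm_arg p true).
Proof.
rewrite /delta.
have [_ -> _] := mm_arg_spec p false; have [_ -> _] := mm_arg_spec p true.
have := L_mm_arg_le p true (mm_arg p false).
have := L_mm_arg_le p false (mm_arg p true).
lra.
Qed.

Local Notation L_shifted t y := (L y + t * (label_count j y - 1)).

Lemma switch_on_best_label (p1 : P) (Delta t : R) (y : labeling V P) :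
  Delta <= delta E theta C lam j p1 -> t <= Delta ->
  exists y' : labeling V P, L_shifted t y' <= L_shifted Delta y.
Proof.
move=> hD1 tD; have s_ge0 := label_count_ge0 R j y.
case y_jp1 : (y (j, p1)).
  exists y; have : 1 <= label_count j y :> R.
    rewrite /label_count (bigD1 p1) //= y_jp1 lerDl.
    by apply: sumr_ge0 => p _; apply: ler0n.
  nra.
exists (relabel y (pred1 p1) (fun=> mm_arg p1 true)).
rewrite lagr_relabel big_pred1_eq label_count_relabel1 y_jp1 mm_arg_at.
have := energy_mm_arg_min y_jp1; rewrite delta_energy_gap in hD1.
rewrite /=; nra.
Qed.

Lemma switch_off_other_labels (p1 : P) (Delta t : R) (y : labeling V P) :
  (forall q, q != p1 -> delta E theta C lam j q <= Delta) -> Delta <= t ->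
  exists y' : labeling V P, L_shifted t y' <= L_shifted Delta y.
Proof.
move=> hD2 Dt; pose A q := y (j, q) && (q != p1).
pose y' := relabel y A (fun q => mm_arg q false); exists y'.
pose N : R := \sum_(q | A q) 1.
have cost : \sum_(q | A q) (energy q (mm_arg q false) - energy q y) <= Delta * N.
  rewrite mulr_sumr; apply: ler_sum => q /andP [y_jq nq1]; rewrite mulr1.
  have := energy_mm_arg_min y_jq; have := hD2 q nq1.
  rewrite delta_energy_gap; lra.
have count : label_count j y = label_count j y' + N.
  rewrite /N big_mkcond /= /label_count -big_split /=; apply: eq_bigr => p _.
  rewrite ffunE /=; case Ap : (A p); last by rewrite addr0.
  by move: Ap => /andP [-> _]; rewrite mm_arg_at add0r.
have at_most_one : label_count j y' <= 1 :> R.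
  rewrite /label_count (bigD1 p1) //= big1 ?addr0 ?lern1 ?leq_b1 //.
  move=> p np1; rewrite ffunE /= /A np1 andbT.
  by case y_jp : (y (j, p)); rewrite ?mm_arg_at.
rewrite lagr_relabel count; nra.
Qed.

End MinMarginals.

Theorem theorem1 (R : realFieldType) (V P : finType)
  (hP : (1 < #|P|)%N)
  (E : {set {set V}}) (hE : forall e, e \in E -> #|e| = 2%N)
  (theta : V -> P -> R) (C : {set V} -> P -> R)
  (hC : forall e p, e \in E -> 0 <= C e p)
  (lam_old : V -> R) (j : V)
  (p1 : P)
  (hp1 : forall p, delta E theta C lam_old j p <= delta E theta C lam_old j p1)
  (Delta : R)
  (hD2 : forall q, q != p1 -> delta E theta C lam_old j q <= Delta)
  (hD1 : Delta <= delta E theta C lam_old j p1)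
  (lam_new : V -> R)
  (hnew_j : lam_new j = lam_old j + Delta)
  (hnew_i : forall i, i != j -> lam_new i = lam_old i) :
  forall lam : V -> R, (forall i, i != j -> lam i = lam_old i) ->
    dualD E theta C lam <= dualD E theta C lam_new.
Proof.
move=> lam eq_lam.
have [_ D_new _] := minL_arg_min (fun y => lagr E theta C y lam_new)
  (isT : predT (y_zero V P)).
set y := ([arg min_(_ < _ | _) _])%O in D_new.
have L_new : lagr E theta C y lam_new
             = lagr E theta C y lam_old + Delta * (label_count j y - 1).
  by rewrite (lagr_shift _ _ _ _ hnew_i) hnew_j [lam_old j + _]addrC addrK.
have [y' better] : exists y' : labeling V P,
    lagr E theta C y' lam_old + (lam j - lam_old j) * (label_count j y' - 1)
    <= lagr E theta C y lam_old + Delta * (label_count j y - 1).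
  have [tD|Dt] := lerP (lam j - lam_old j) Delta.
  - exact: switch_on_best_label hD1 tD.
  - exact: switch_off_other_labels hD2 (ltW Dt).
rewrite -(lagr_shift _ _ _ _ eq_lam) -L_new in better.
rewrite /dualD D_new.
apply: le_trans better; exact: minL_le.
Qed.
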